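(* Let $n>p\ge 2$ and consider the linear model $\mathbf{y}=\mathbf{X}\boldsymbol{\beta}+\boldsymbol{\varepsilon}$, where $\mathbf{X}=[\mathbf{x}_1,\dots,\mathbf{x}_p]$ is a known $n\times p$ matrix with linearly independent columns, each column having mean $0$ and Euclidean length $1$, $\boldsymbol{\beta}=(\beta_1,\dots,\beta_p)^T$ is unknown, and $E(\boldsymbol{\varepsilon})=\mathbf{0}$, $\mathrm{var}(\boldsymbol{\varepsilon})=\mathbf{I}$. Suppose there is a constant $r>0$ with $\mathrm{corr}(\mathbf{x}_i,\mathbf{x}_j)=r$ for all $i\ne j$. Let $\hat{\boldsymbol{\beta}}=(\mathbf{X}^T\mathbf{X})^{-1}\mathbf{X}^T\mathbf{y}$, and for $\mathbf{w}$ in the simplex $W=\{\mathbf{w}\in\mathbb{R}^p: w_i\ge0,\ \sum_i w_i=1\}$ write $\mathrm{var}(\hat{\xi}(\mathbf{w}),r)$ for the variance of $\mathbf{w}^T\hat{\boldsymbol{\beta}}$ (which depends only on $p$, $r$ and $\mathbf{w}$). Let $\mathbf{w}_j\in W$ be the $j$-th standard basis vector, so that $\mathbf{w}_j^T\hat{\boldsymbol{\beta}}=\hat\beta_j$. Then for each fixed $r$, $$\mathrm{var}(\hat{\beta}_j,r)=\mathrm{var}(\hat{\xi}(\mathbf{w}_j),r)=\max_{\mathbf{w}\in W}\mathrm{var}(\hat{\xi}(\mathbf{w}),r).$$ Further, $\mathrm{var}(\hat{\beta}_j,r)$, viewed as a function of $r\in(0,1)$, is strictly monotone increasing and $\lim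_{r\to1}\mathrm{var}(\hat{\beta}_j,r)=+\infty$.
   Context: The variance of $\mathbf{w}^T\hat{\boldsymbol\beta}$ in this model equals $\mathbf{w}^T(\mathbf{X}^T\mathbf{X})^{-1}\mathbf{w}$, where $\mathbf{X}^T\mathbf{X}$ has $1$ on the diagonal and $r$ off the diagonal; hence it is a function of $p$, $r$ and $\mathbf{w}$ only. *)

From HB Require Import structures.
From mathcomp Require Import all_boot all_order all_algebra.
From mathcomp Require Import all_classical all_reals all_analysis.
Set Implicit Arguments. Unset Strict Implicit. Unset Printing Implicit Defensive.
Import Order.TTheory GRing.Theory Num.Theory.
Local Open Scope ring_scope.

Section Defs.
Variable R : realType.

Definition mean {n} (x : 'cV[R]_n) : R := (\sum_i x i 0) / n%:R.

Definition corr {n} (x y : 'cV[R]_n) : R :=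
  (\sum_i (x i 0 - mean x) * (y i 0 - mean y)) /
  Num.sqrt ((\sum_i (x i 0 - mean x) ^+ 2) * (\sum_i (y i 0 - mean y) ^+ 2)).

Definition vlen {n} (x : 'cV[R]_n) : R := Num.sqrt (\sum_i x i 0 ^+ 2).

Definition equicorr_design {n p} (X : 'M[R]_(n, p)) (r : R) : Prop :=
  [/\ \rank X = p,
      forall i : 'I_p, mean (col i X) = 0,
      forall i : 'I_p, vlen (col i X) = 1
    & forall i k : 'I_p, i != k -> corr (col i X) (col k X) = r].

(* var(w^T betahat) = w^T (X^T X)^{-1} w  (var(eps) = I) *)
Definition var_xi {n p} (X : 'M[R]_(n, p)) (w : 'cV[R]_p) : R :=
  (w^T *m invmx (X^T *m X) *m w) 0 0.

Definition simplex {p} (w : 'cV[R]_p) : Prop :=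
  (forall i, 0 <= w i 0) /\ \sum_i w i 0 = 1.

Definition ej {p} (j : 'I_p) : 'cV[R]_p := delta_mx j 0.

Definition eqcorr_gram p (r : R) : 'M[R]_p :=
  \matrix_(i, k) (if i == k then 1 else r).

Definition var_r p (r : R) (w : 'cV[R]_p) : R :=
  (w^T *m invmx (eqcorr_gram p r) *m w) 0 0.

End Defs.
Arguments ej {R p} j.
Arguments var_r {R} p r w.
Arguments eqcorr_gram {R} p r.

From HB Require Import structures.
From mathcomp Require Import all_boot all_order all_algebra.
From mathcomp Require Import all_classical all_reals all_analysis.
From mathcomp Require Import ring lra.
Set Implicit Arguments. Unset Strict Implicit. Unset Printing Implicit Defensive.
Import Order.TTheory GRing.Theory Num.Theory.
Import numFieldNormedType.Exports.
Local Open Scope classical_set_scope.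
Local Open Scope ring_scope.

(* Since the columns are centred and of unit length, correlations are inner
   products and X^T X = (1 - r) I + r J, J the all-ones matrix.  Its inverse is
   again of the form a I + b J, with a = 1/(1-r) and
   b = -r/((1-r)(1+(p-1)r)), so w^T (X^T X)^-1 w = a sum w_i^2 + b (sum w_i)^2.
   On the simplex sum w_i = 1 and sum w_i^2 <= 1, with equality at the
   vertices, so the vertices maximise the variance.  The diagonal entry is
   (1 + (p-2)r)/((1-r)(1+(p-1)r)): cross-multiplying shows it increasing, and
   it dominates 1/(2(1-r)), which blows up as r -> 1. *)

Section OnesMatrix.
Variables (R : comNzRingType) (p : nat).
Local Notation J := (const_mx 1 : 'M[R]_p).

Lemma mulmx_const1 : J *m J = p%:R *: J.
Proof.
apply/matrixP=> i k; rewrite !mxE.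
under eq_bigr do rewrite !mxE mulr1.
by rewrite sumr_const card_ord mulr1 -[RHS]mulr_natl mulr1.
Qed.

Lemma quad_scalar_const1 (a b : R) (w : 'cV[R]_p) :
  (w^T *m (a%:M + b *: J) *m w) 0 0 =
  a * \sum_i w i 0 ^+ 2 + b * (\sum_i w i 0) ^+ 2.
Proof.
have wJ : w^T *m J = const_mx (\sum_i w i 0).
  by apply/matrixP=> i k; rewrite ord1 !mxE; apply: eq_bigr => l _; rewrite !mxE mulr1.
rewrite mulmxDr mulmxDl mul_mx_scalar -scalemxAr wJ -!scalemxAl !mxE.
congr (_ * _ + _ * _); first by apply: eq_bigr => i _; rewrite !mxE expr2.
by rewrite expr2 mulr_sumr; apply: eq_bigr => i _; rewrite mxE.
Qed.

End OnesMatrix.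

Lemma mulmx1_invmx (R : comUnitRingType) p (A B : 'M[R]_p) :
  A *m B = 1%:M -> invmx A = B.
Proof.
move=> AB; have [uA _] := mulmx1_unit AB.
by rewrite -[RHS](mulKmx uA) AB mulmx1.
Qed.

Section Design.
Variable R : realType.

Lemma vlen_eq1 n (x : 'cV[R]_n) : vlen x = 1 -> \sum_i x i 0 ^+ 2 = 1.
Proof.
rewrite /vlen => x1; have x_ge0 : 0 <= \sum_i x i 0 ^+ 2.
  by apply: sumr_ge0 => i _; exact: sqr_ge0.
by rewrite -(sqr_sqrtr x_ge0) x1 expr1n.
Qed.

Lemma corr_centred_unit n (x y : 'cV[R]_n) :
  mean x = 0 -> mean y = 0 -> vlen x = 1 -> vlen y = 1 ->
  corr x y = \sum_i x i 0 * y i 0.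
Proof.
move=> mx my /vlen_eq1 x1 /vlen_eq1 y1.
rewrite /corr mx my; under eq_bigr do rewrite !subr0.
under [X in Num.sqrt (X * _)]eq_bigr do rewrite subr0.
under [X in Num.sqrt (_ * X)]eq_bigr do rewrite subr0.
by rewrite x1 y1 mulr1 sqrtr1 divr1.
Qed.

Lemma dot_le1 n (x y : 'cV[R]_n) :
  \sum_i x i 0 ^+ 2 = 1 -> \sum_i y i 0 ^+ 2 = 1 -> \sum_i x i 0 * y i 0 <= 1.
Proof.
move=> x1 y1; have : 0 <= \sum_i (x i 0 - y i 0) ^+ 2.
  by apply: sumr_ge0 => i _; exact: sqr_ge0.
have -> : \sum_i (x i 0 - y i 0) ^+ 2 =
          \sum_i x i 0 ^+ 2 + \sum_i y i 0 ^+ 2 - 2 * \sum_i x i 0 * y i 0.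
  by rewrite mulr_sumr -big_split -sumrB; apply: eq_bigr => i _ /=; ring.
rewrite x1 y1; lra.
Qed.

Variables (n p : nat).
Implicit Types (X : 'M[R]_(n, p)) (r : R).

Lemma equicorr_gram X r : equicorr_design X r -> X^T *m X = eqcorr_gram p r.
Proof.
case=> _ Xmean Xlen Xcorr; apply/matrixP=> i k; rewrite !mxE.
have -> : \sum_l X^T i l * X l k = \sum_l col i X l 0 * col k X l 0.
  by apply: eq_bigr => l _; rewrite !mxE.
case: eqVneq => [<-|ik]; last by rewrite -corr_centred_unit ?Xcorr.
by under eq_bigr do rewrite -expr2; exact: vlen_eq1.
Qed.

Lemma equicorr_le1 X r : (1 < p)%N -> equicorr_design X r -> r <= 1.
Proof.
move=> p_gt1 XD; pose i0 : 'I_p := Ordinal (ltnW p_gt1); pose i1 : 'I_p := Ordinal p_gt1.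
have i01 : i0 != i1 by [].
have [_ _ Xlen _] := XD.
have <- : (X^T *m X) i0 i1 = r by rewrite (equicorr_gram XD) mxE (negbTE i01).
suff -> : (X^T *m X) i0 i1 = \sum_l col i0 X l 0 * col i1 X l 0.
  by apply: dot_le1; apply: vlen_eq1.
by rewrite mxE; apply: eq_bigr => l _; rewrite !mxE.
Qed.

End Design.

Section EquicorrelationInverse.
Variables (R : realType) (p : nat).
Local Notation J := (const_mx 1 : 'M[R]_p).
Local Notation d r := (1 + (p%:R - 1) * r).

Lemma eqcorr_gramE (r : R) : eqcorr_gram p r = (1 - r)%:M + r *: J.
Proof. by apply/matrixP=> i k; rewrite !mxE; case: eqP => _ /=; lra. Qed.

Lemma invmx_eqcorr_gram (r : R) : r != 1 -> d r != 0 ->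
  invmx (eqcorr_gram p r) = (1 - r)^-1%:M + (- (r / ((1 - r) * d r))) *: J.
Proof.
move=> r_neq1 d_neq0; apply: mulmx1_invmx; rewrite eqcorr_gramE.
rewrite mulmxDl !mulmxDr -!scalemxAl -!scalemxAr mulmx_const1.
rewrite !mul_scalar_mx mul_mx_scalar.
have r1_neq0 : 1 - r != 0 by rewrite subr_eq0 eq_sym.
by apply/matrixP=> i k; rewrite !mxE; case: eqP => _ /=; field; rewrite r1_neq0 d_neq0.
Qed.

Lemma var_rE (r : R) (w : 'cV[R]_p) : r != 1 -> d r != 0 ->
  var_r p r w = (1 - r)^-1 * \sum_i w i 0 ^+ 2
                - r / ((1 - r) * d r) * (\sum_i w i 0) ^+ 2.
Proof.
by move=> r_neq1 d_neq0; rewrite /var_r invmx_eqcorr_gram // quad_scalar_const1 mulNr.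
Qed.

(* At r = 1 the matrix is singular and invmx returns it unchanged; this junk
   value lets the maximisation go through at r = 1 without using the rank
   hypothesis of the design, which would exclude r = 1. *)
Lemma var_r1 (w : 'cV[R]_p) : (1 < p)%N -> var_r p 1 w = (\sum_i w i 0) ^+ 2.
Proof.
move=> p_gt1; pose i0 : 'I_p := Ordinal (ltnW p_gt1); pose i1 : 'I_p := Ordinal p_gt1.
have G_sing : eqcorr_gram p (1 : R) \notin unitmx.
  rewrite unitmxE (@determinant_alternate _ _ _ i0 i1) ?unitr0 //.
  by move=> l; rewrite !mxE !if_same.
by rewrite /var_r invmx_out // eqcorr_gramE subrr quad_scalar_const1; ring.
Qed.

Lemma quad_ej (A : 'M[R]_p) (j : 'I_p) : ((ej j)^T *m A *m ej j) 0 0 = A j j.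
Proof. by rewrite /ej trmx_delta -rowE -colE !mxE. Qed.

Lemma sum_ej (j : 'I_p) : \sum_i (ej (R:=R) j) i 0 = 1.
Proof. by rewrite (bigD1 j) //= big1 => [|i /negbTE ij]; rewrite !mxE ?eqxx ?ij ?addr0. Qed.

Lemma sum_sqr_ej (j : 'I_p) : \sum_i (ej (R:=R) j) i 0 ^+ 2 = 1.
Proof.
rewrite (bigD1 j) //= big1 => [|i /negbTE ij]; rewrite !mxE ?eqxx ?ij ?expr0n //.
by rewrite expr1n addr0.
Qed.

Lemma simplex_ej (j : 'I_p) : simplex (ej (R:=R) j).
Proof. by split => [i|]; [rewrite mxE ler0n | exact: sum_ej]. Qed.

Lemma simplex_sum_sqr_le1 (w : 'cV[R]_p) : simplex w -> \sum_i w i 0 ^+ 2 <= 1.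
Proof.
move=> [w_ge0 w_sum1]; rewrite -[leRHS]w_sum1; apply: ler_sum => i _.
have wi_le1 : w i 0 <= 1 by rewrite -w_sum1 (bigD1 i) //= lerDl sumr_ge0.
by rewrite expr2 ler_piMr.
Qed.

Lemma var_r_simplex_le (r : R) (w : 'cV[R]_p) (j : 'I_p) :
  (1 < p)%N -> 0 <= r <= 1 -> simplex w -> var_r p r w <= var_r p r (ej j).
Proof.
move=> p_gt1 /andP[r_ge0 r_le1] wW; have [_ w_sum1] := wW.
move: r_le1; rewrite le_eqVlt => /predU1P[->|r_lt1].
  by rewrite !var_r1 // w_sum1 sum_ej.
have d_gt0 : 0 < d r.
  by rewrite ltr_pwDl // mulr_ge0 // subr_ge0 ler1n ltnW.
rewrite !var_rE ?(lt_eqF r_lt1) ?(gt_eqF d_gt0) // w_sum1 sum_ej sum_sqr_ej lerD2r.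
rewrite ler_pM2l ?invr_gt0 ?subr_gt0 //; exact: simplex_sum_sqr_le1.
Qed.

End EquicorrelationInverse.

Section DiagonalVariance.
Variables (R : realType) (p : nat).
Hypothesis p_ge2 : (2 <= p)%N.

Definition eqcorr_var_diag (r : R) : R :=
  (1 + (p%:R - 2) * r) / ((1 - r) * (1 + (p%:R - 1) * r)).

Let q : R := p%:R - 1.
Let q_ge1 : 1 <= q.
Proof. by rewrite /q lerBrDr (_ : 1 + 1 = 2%:R) ?ler_nat. Qed.
Let p2E : p%:R - 2 = q - 1 :> R.
Proof. by rewrite /q; ring. Qed.
Let den_gt0 (r : R) : 0 <= r -> 0 < 1 + q * r.
Proof. by move=> r_ge0; rewrite ltr_pwDl // mulr_ge0 // (le_trans ler01). Qed.

Lemma var_r_ej (r : R) (j : 'I_p) : 0 < r < 1 -> var_r p r (ej j) = eqcorr_var_diag r.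
Proof.
move=> /andP[r_gt0 r_lt1]; have d_gt0 := den_gt0 (ltW r_gt0).
rewrite var_rE ?(lt_eqF r_lt1) ?(gt_eqF d_gt0) // sum_ej sum_sqr_ej /eqcorr_var_diag -/q p2E.
by field; rewrite (gt_eqF d_gt0) gt_eqF // subr_gt0.
Qed.

Lemma eqcorr_var_diag_lt (r1 r2 : R) :
  0 <= r1 -> r1 < r2 -> r2 < 1 -> eqcorr_var_diag r1 < eqcorr_var_diag r2.
Proof.
move=> r1_ge0 r12 r2_lt1; rewrite /eqcorr_var_diag -/q p2E.
have r2_gt0 : 0 < r2 by apply: le_lt_trans r12.
have d1 : 0 < (1 - r1) * (1 + q * r1).
  by rewrite mulr_gt0 ?den_gt0 // subr_gt0 (lt_trans r12).
have d2 : 0 < (1 - r2) * (1 + q * r2) by rewrite mulr_gt0 ?den_gt0 ?ltW // subr_gt0.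
rewrite ltr_pdivrMr // mulrAC ltr_pdivlMr // -subr_gt0.
have -> : (1 + (q - 1) * r2) * ((1 - r1) * (1 + q * r1))
          - (1 + (q - 1) * r1) * ((1 - r2) * (1 + q * r2))
        = q * (r2 - r1) * (r2 + r1 + (q - 1) * r1 * r2) by ring.
have q_gt0 : 0 < q := lt_le_trans ltr01 q_ge1.
have qr_ge0 : 0 <= (q - 1) * r1 * r2 by rewrite !mulr_ge0 ?subr_ge0 // ltW.
have s_gt0 : 0 < r2 + r1 + (q - 1) * r1 * r2 by lra.
by rewrite !mulr_gt0 // subr_gt0.
Qed.

Lemma eqcorr_var_diag_ge (r : R) : 0 < r < 1 -> (2 * (1 - r))^-1 <= eqcorr_var_diag r.
Proof.
move=> /andP[r_gt0 r_lt1]; rewrite /eqcorr_var_diag -/q p2E.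
have d_gt0 := den_gt0 (ltW r_gt0); have r1_gt0 : 0 < 1 - r by rewrite subr_gt0.
rewrite -subr_ge0.
have -> : (1 + (q - 1) * r) / ((1 - r) * (1 + q * r)) - (2 * (1 - r))^-1
        = (1 - r + (q - 1) * r) / (2 * ((1 - r) * (1 + q * r))).
  by field; rewrite (gt_eqF d_gt0) (gt_eqF r1_gt0).
have qr_ge0 : 0 <= (q - 1) * r by rewrite mulr_ge0 ?subr_ge0 // ltW.
by rewrite divr_ge0 ?ltW ?mulr_gt0 //; lra.
Qed.

End DiagonalVariance.

Lemma cvgy_inv_1B (R : realType) :
  (2 * (1 - x))^-1 @[x --> (1 : R)^'-] --> +oo.
Proof.
apply/(@cvgrVy _ _ _ _ (fun x : R => 2 * (1 - x))).
  by near=> x; rewrite mulr_gt0 // subr_gt0; near: x; exact: nbhs_left_lt.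
apply: cvg_at_left_filter; rewrite -[X in _ --> X](mulr0 2) -(subrr 1).
by apply: cvgM; [exact: cvg_cst | apply: cvgB; [exact: cvg_cst | exact: cvg_id]].
Unshelve. all: by end_near.
Qed.

Theorem corollary1 (R : realType) (n p : nat) (j : 'I_p) :
  (2 <= p)%N -> (p < n)%N ->
  (* the variance depends only on p, r, w *)
  (forall (r : R) (X : 'M[R]_(n, p)), 0 < r -> equicorr_design X r ->
     forall w : 'cV[R]_p, var_xi X w = var_r p r w) /\
  (* for each fixed r: var(betahat_j, r) = var(xi(w_j), r) = max_{w in W} var(xi(w), r) *)
  (forall (r : R) (X : 'M[R]_(n, p)), 0 < r -> equicorr_design X r ->
     simplex (ej (R:=R) j) /\
     var_xi X (ej j) = (invmx (X^T *m X)) j j /\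
     (forall w : 'cV[R]_p, simplex w -> var_xi X w <= var_xi X (ej j))) /\
  (* r |-> var(betahat_j, r) strictly increasing on (0,1) *)
  (forall r1 r2 : R, 0 < r1 -> r1 < r2 -> r2 < 1 ->
     var_r p r1 (ej j) < var_r p r2 (ej j)) /\
  (* lim_{r -> 1} var(betahat_j, r) = +oo *)
  (var_r p (x:R) (ej j) @[x --> (1:R)^'-] --> +oo).
Proof.
move=> p_ge2 _.
have var_xiE r (X : 'M[R]_(n, p)) w : equicorr_design X r -> var_xi X w = var_r p r w.
  by move=> XD; rewrite /var_xi /var_r (equicorr_gram XD).
split; first by move=> r X _ XD w; exact: var_xiE.
split.
  move=> r X r_gt0 XD; split; first exact: simplex_ej.
  split; first by rewrite /var_xi quad_ej.
  move=> w wW; rewrite !(var_xiE r) //; apply: var_r_simplex_le => //.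
  by rewrite ltW //= (equicorr_le1 p_ge2 XD).
split.
  move=> r1 r2 r1_gt0 r12 r2_lt1.
  rewrite !var_r_ej ?r1_gt0 ?(lt_trans r12) ?(lt_trans r1_gt0) //.
  exact: eqcorr_var_diag_lt (ltW r1_gt0) r12 r2_lt1.
apply: (ger_cvgy _ (@cvgy_inv_1B R)).
near=> x; have x_in : 0 < x < 1.
  by apply/andP; split; near: x; [exact: nbhs_left_gt | exact: nbhs_left_lt].
by rewrite var_r_ej //; exact: eqcorr_var_diag_ge.
Unshelve. all: by end_near.
Qed.
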